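(* Let $G$ be a multiplicatively written Abelian group, $\phi$ a height on $G$, $\alpha\in G$, and $0\le a<b\le\infty$. Then $(a,b)$ is uniform if and only if every point $t\in(a,b)$ is contained in some open interval $J\subseteq(a,b)$ which is uniform.
   Context: A height on $G$ is a map $\phi:G\to[0,\infty)$ with $\phi(e)=0$ and $\phi(\beta)=\phi(\beta^{-1})$. $\mathbb R^\infty$ is the set of finitely supported real sequences, $\|\mathbf x\|_t=(\sum_n|x_n|^t)^{1/t}$. $\phi_t(\alpha)=\inf\{(\sum_{n=1}^N\phi(\alpha_n)^t)^{1/t}:N\in\mathbb N,\ \alpha_n\in G,\ \alpha=\prod_{n=1}^N\alpha_n\}$. A set $K\subseteq(0,\infty)$ is uniform if there exists $\mathbf x\in\mathbb R^\infty$ with $\phi_t(\alpha)=\|\mathbf x\|_t$ for all $t\in K$. *)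

From Stdlib Require Import Reals List.
Open Scope R_scope.

Record AbGroup := {
  carrier :> Type;
  gmul : carrier -> carrier -> carrier;
  ginv : carrier -> carrier;
  gone : carrier;
  gmulA : forall x y z, gmul x (gmul y z) = gmul (gmul x y) z;
  gmulC : forall x y, gmul x y = gmul y x;
  gmul1 : forall x, gmul gone x = x;
  gmulV : forall x, gmul (ginv x) x = gone
}.

Definition is_height (G : AbGroup) (phi : G -> R) : Prop :=
  phi (gone G) = 0 /\ (forall g, 0 <= phi g) /\ (forall g, phi g = phi (ginv G g)).

(* x^t for x >= 0, t > 0, with 0^t = 0 (Stdlib's Rpower 0 t is 1). *)
Definition rpow (x t : R) : R :=
  if Rlt_dec 0 x then Rpower x t else 0.

Definition gprod (G : AbGroup) (l : list G) : G :=
  fold_right (gmul G) (gone G) l.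

Definition phisum (G : AbGroup) (phi : G -> R) (t : R) (l : list G) : R :=
  rpow (fold_right Rplus 0 (map (fun g => rpow (phi g) t) l)) (/ t).

Definition phi_t_vals (G : AbGroup) (phi : G -> R) (t : R) (alpha : G) (v : R) : Prop :=
  exists l : list G, l <> nil /\ gprod G l = alpha /\ v = phisum G phi t l.

Definition is_inf (S : R -> Prop) (v : R) : Prop :=
  (forall s, S s -> v <= s) /\ (forall w, (forall s, S s -> w <= s) -> w <= v).

Definition phi_t_eq (G : AbGroup) (phi : G -> R) (t : R) (alpha : G) (v : R) : Prop :=
  is_inf (phi_t_vals G phi t alpha) v.

(* elements of R^infty are finitely supported sequences, represented by
   the finite list of their (possibly) nonzero entries *)
Definition tnorm (x : list R) (t : R) : R :=
  rpow (fold_right Rplus 0 (map (fun r => rpow (Rabs r) t) x)) (/ t).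

Definition uniform (G : AbGroup) (phi : G -> R) (alpha : G) (K : R -> Prop) : Prop :=
  exists x : list R, forall t, K t -> phi_t_eq G phi t alpha (tnorm x t).

(* extended upper endpoints: None = +infinity *)
Definition lt_ext (t : R) (b : option R) : Prop :=
  match b with Some b' => t < b' | None => True end.

Definition oint (a : R) (b : option R) : R -> Prop :=
  fun t => a < t /\ lt_ext t b.

From Stdlib Require Import Reals List Lra Classical.
From Coquelicot Require Import Coquelicot.
Open Scope R_scope.

(* 1. Rigidity.  The function t ↦ Σ_n |x_n|^t = Σ_n e^{t ln|x_n|} is an exponential
      sum Σ_k c_k e^{m_k t}; an exponential sum vanishing on a nondegenerate interval
      vanishes identically (induction on the number of terms: multiply by e^{-m_1 t}
      and differentiate).  Hence if ‖x‖_t = ‖y‖_t on an interval of positive t, then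
      ‖x‖_t = ‖y‖_t for all t, so two witnesses of φ_t(α) on overlapping intervals
      give the same norms everywhere.
   2. Connectedness.  A predicate which is locally constant on an interval of ℝ is
      constant on it (a supremum argument).

   Fix a witness x₀ near some point.  By rigidity, "φ_s(α) = ‖x₀‖_s for all s near t"
   is locally constant in t ∈ (a,b), hence true everywhere by connectedness. *)

Definition expsum (l : list (R * R)) (t : R) : R :=
  fold_right (fun p acc => fst p * exp (snd p * t) + acc) 0 l.

Definition expsum_deriv (l : list (R * R)) : list (R * R) :=
  map (fun p => (fst p * snd p, snd p)) l.

Definition expsum_shift (m : R) (l : list (R * R)) : list (R * R) :=
  map (fun p => (fst p, snd p - m)) l.

Definition expsum_opp (l : list (R * R)) : list (R * R) :=
  map (fun p => (- fst p, snd p)) l.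

Lemma is_derive_expsum (l : list (R * R)) (t : R) :
  is_derive (expsum l) t (expsum (expsum_deriv l) t).
Proof.
  induction l as [|[c m] l IH]; simpl.
  - apply (is_derive_const 0 t).
  - apply (is_derive_plus (fun t => c * exp (m * t)) (expsum l)); [|exact IH].
    auto_derive; auto. ring.
Qed.

Lemma expsum_shiftE (m : R) (l : list (R * R)) (t : R) :
  expsum l t = exp (m * t) * expsum (expsum_shift m l) t.
Proof.
  induction l as [|[c k] l IH]; simpl; [ring|].
  rewrite IH, <- (Rplus_minus (m * t) (k * t)).
  replace (k * t - m * t) with ((k - m) * t) by ring.
  rewrite exp_plus. ring.
Qed.

Lemma expsum_app (l1 l2 : list (R * R)) (t : R) :
  expsum (l1 ++ l2) t = expsum l1 t + expsum l2 t.
Proof. induction l1 as [|p l1 IH]; simpl; [ring|]. rewrite IH; ring. Qed.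

Lemma expsum_oppE (l : list (R * R)) (t : R) : expsum (expsum_opp l) t = - expsum l t.
Proof. induction l as [|p l IH]; simpl; [ring|]. rewrite IH; ring. Qed.

Lemma derive_zero_on_interval (g : R -> R) (u v t l : R) :
  u < t < v -> (forall s, u < s < v -> g s = 0) -> is_derive g t l -> l = 0.
Proof.
  intros Ht Hz Hd.
  assert (H0 : is_derive (fun _ => 0) t l).
  { apply (is_derive_ext_loc g); [|exact Hd].
    apply (locally_interval _ t u v); simpl; try lra.
    intros y Hy1 Hy2; apply Hz; lra. }
  pose proof (is_derive_unique _ _ _ (is_derive_const (0 : R) t)) as D0.
  rewrite (is_derive_unique _ _ _ H0) in D0. exact D0.
Qed.

Lemma constant_of_derive_zero (g dg : R -> R) :
  (forall t, is_derive g t (dg t)) -> (forall t, dg t = 0) -> forall s t, g t = g s.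
Proof.
  intros Hd H0 s t.
  destruct (MVT_cor4 g dg s (Rabs (t - s)) (fun c _ => Hd c) t (Rle_refl _))
    as [c [Hc _]].
  rewrite H0 in Hc. lra.
Qed.

Lemma expsum_identity (l : list (R * R)) (u v : R) :
  u < v -> (forall t, u < t < v -> expsum l t = 0) -> forall t, expsum l t = 0.
Proof.
  remember (length l) as n eqn:Hlen. revert l Hlen.
  induction n as [|n IH]; intros l Hlen Huv Hz t.
  { destruct l; [reflexivity|discriminate]. }
  destruct l as [|[c m] r]; [reflexivity|]. injection Hlen as Hlen.
  set (g := expsum (expsum_shift m ((c, m) :: r))).
  assert (g_zero : forall s, u < s < v -> g s = 0).
  { intros s Hs. pose proof (exp_pos (m * s)) as Hpos.
    pose proof (expsum_shiftE m ((c, m) :: r) s) as E.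
    rewrite (Hz s Hs) in E. fold g in E.
    apply (Rmult_eq_reg_l (exp (m * s))); [|lra].
    rewrite Rmult_0_r. symmetry. exact E. }
  (* the term c·e^{0·t} of g is constant, so g' has one term fewer *)
  assert (g_deriv : forall s, is_derive g s (expsum (expsum_deriv (expsum_shift m r)) s)).
  { intros s. pose proof (is_derive_expsum (expsum_shift m ((c, m) :: r)) s) as D.
    replace (expsum (expsum_deriv (expsum_shift m r)) s)
      with (expsum (expsum_deriv (expsum_shift m ((c, m) :: r))) s); [exact D|].
    simpl. replace (m - m) with 0 by ring. ring. }
  assert (g'_zero : forall s, expsum (expsum_deriv (expsum_shift m r)) s = 0).
  { apply (IH (expsum_deriv (expsum_shift m r))); [|exact Huv|].
    { unfold expsum_deriv, expsum_shift. rewrite !length_map. exact Hlen. }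
    intros s Hs. exact (derive_zero_on_interval g u v s _ Hs g_zero (g_deriv s)). }
  assert (Hg : g t = 0).
  { rewrite (constant_of_derive_zero g _ g_deriv g'_zero ((u + v) / 2) t).
    apply g_zero; lra. }
  rewrite (expsum_shiftE m). fold g. rewrite Hg. ring.
Qed.

Lemma expsum_eq_identity (l1 l2 : list (R * R)) (u v : R) :
  u < v -> (forall t, u < t < v -> expsum l1 t = expsum l2 t) ->
  forall t, expsum l1 t = expsum l2 t.
Proof.
  intros Huv Heq t.
  assert (diff_zero : expsum (l1 ++ expsum_opp l2) t = 0).
  { apply (expsum_identity _ u v Huv). intros s Hs.
    rewrite expsum_app, expsum_oppE, (Heq s Hs). ring. }
  rewrite expsum_app, expsum_oppE in diff_zero. lra.
Qed.

Definition powsum (x : list R) (t : R) : R :=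
  fold_right Rplus 0 (map (fun r => rpow (Rabs r) t) x).

(* |r|^t = e^{t ln|r|} for r ≠ 0, and 0 for r = 0. *)
Definition powsum_exps (x : list R) : list (R * R) :=
  map (fun r => (if Rlt_dec 0 (Rabs r) then 1 else 0, ln (Rabs r))) x.

Lemma powsum_expsum (x : list R) (t : R) : powsum x t = expsum (powsum_exps x) t.
Proof.
  induction x as [|r x IH]; [reflexivity|].
  change (rpow (Rabs r) t + powsum x t = expsum (powsum_exps (r :: x)) t).
  rewrite IH. unfold rpow, Rpower. simpl.
  destruct (Rlt_dec 0 (Rabs r)); simpl; [rewrite Rmult_comm|]; ring.
Qed.

Lemma rpow_nonneg (x t : R) : 0 <= rpow x t.
Proof. unfold rpow, Rpower. destruct (Rlt_dec 0 x); [left; apply exp_pos|lra]. Qed.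

Lemma powsum_nonneg (x : list R) (t : R) : 0 <= powsum x t.
Proof.
  induction x as [|r x IH]; [unfold powsum; simpl; lra|].
  change (0 <= rpow (Rabs r) t + powsum x t).
  pose proof (rpow_nonneg (Rabs r) t). lra.
Qed.

Lemma rpow_inj (y z p : R) : 0 <= y -> 0 <= z -> 0 < p -> rpow y p = rpow z p -> y = z.
Proof.
  intros Hy Hz Hp E. unfold rpow, Rpower in E.
  destruct (Rlt_dec 0 y); destruct (Rlt_dec 0 z).
  - apply exp_inv in E. apply ln_inv; auto. apply (Rmult_eq_reg_l p); lra.
  - pose proof (exp_pos (p * ln y)); lra.
  - pose proof (exp_pos (p * ln z)); lra.
  - lra.
Qed.

Lemma tnorm_unique_continuation (x y : list R) (u v : R) :
  0 <= u < v -> (forall t, u < t < v -> tnorm x t = tnorm y t) ->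
  forall t, tnorm x t = tnorm y t.
Proof.
  intros Huv Heq t.
  assert (powsum_eq : forall s, powsum x s = powsum y s).
  { intros s. rewrite !powsum_expsum. revert s.
    apply (expsum_eq_identity _ _ u v); [lra|].
    intros s Hs. rewrite <- !powsum_expsum.
    apply (rpow_inj _ _ (/ s)); try apply powsum_nonneg.
    - apply Rinv_0_lt_compat; lra.
    - exact (Heq s Hs). }
  change (rpow (powsum x t) (/ t) = rpow (powsum y t) (/ t)).
  rewrite powsum_eq. reflexivity.
Qed.

Lemma inf_unique (S : R -> Prop) (v1 v2 : R) : is_inf S v1 -> is_inf S v2 -> v1 = v2.
Proof.
  intros [H1 H1'] [H2 H2']. apply Rle_antisym; [apply H2'|apply H1']; assumption.
Qed.

Lemma phi_t_witness_rigid (G : AbGroup) (phi : G -> R) (alpha : G) (x y : list R)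
    (u v : R) :
  0 <= u < v ->
  (forall t, u < t < v -> phi_t_eq G phi t alpha (tnorm x t)) ->
  (forall t, u < t < v -> phi_t_eq G phi t alpha (tnorm y t)) ->
  forall t, tnorm x t = tnorm y t.
Proof.
  intros Huv Hx Hy. apply (tnorm_unique_continuation x y u v Huv).
  intros t Ht. exact (inf_unique _ _ _ (Hx t Ht) (Hy t Ht)).
Qed.

Lemma locally_constant_segment (P : R -> Prop) (s t : R) :
  s <= t ->
  (forall r, s <= r <= t ->
     exists u v, u < r < v /\ forall q, u < q < v -> (P q <-> P r)) ->
  P s -> P t.
Proof.
  intros Hst Hloc Ps.
  set (E := fun z => s <= z <= t /\ forall r, s <= r <= z -> P r).
  assert (Es : E s) by (split; [lra|intros r Hr; replace r with s by lra; exact Ps]).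
  assert (bounded : bound E) by (exists t; intros z [Hz _]; lra).
  destruct (completeness E bounded (ex_intro _ s Es)) as [m [Hub Hlub]].
  assert (Hsm : s <= m) by exact (Hub s Es).
  assert (Hmt : m <= t) by (apply Hlub; intros z [Hz _]; lra).
  destruct (Hloc m (conj Hsm Hmt)) as [p [q [Hm Hpq]]].
  (* some z ∈ E lies in (p, m], since p < m = sup E *)
  assert (near_sup : exists z, E z /\ p < z).
  { apply NNPP; intro N.
    assert (m <= p); [|lra].
    apply Hlub; intros z Ez.
    destruct (Rle_dec z p) as [|Hzp]; [assumption|].
    exfalso; apply N; exists z; split; [exact Ez|lra]. }
  destruct near_sup as [z [[Hz Ez] Hpz]].
  assert (Hzm : z <= m) by exact (Hub z (conj Hz Ez)).
  assert (Pm : P m) by (apply (proj1 (Hpq z ltac:(lra))), Ez; lra).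
  (* hence E extends beyond m unless m = t *)
  assert (E_next : E (Rmin ((m + q) / 2) t)).
  { pose proof (Rmin_l ((m + q) / 2) t). pose proof (Rmin_r ((m + q) / 2) t).
    split; [split; [apply Rmin_glb|]; lra|].
    intros r Hr. destruct (Rle_dec r z) as [Hrz|Hrz]; [apply Ez; lra|].
    apply (proj2 (Hpq r ltac:(lra))), Pm. }
  pose proof (Hub _ E_next) as Hnext.
  assert (m = t) as <- by (unfold Rmin in Hnext; destruct Rle_dec; lra).
  exact Pm.
Qed.

Lemma locally_constant_interval (I P : R -> Prop) :
  (forall r s q, I r -> I s -> r <= q <= s -> I q) ->
  (forall t, I t -> exists u v, u < t < v /\ forall q, u < q < v -> (P q <-> P t)) ->
  forall s t, I s -> I t -> P s -> P t.
Proof.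
  intros convex loc s t Is It Ps.
  destruct (Rle_dec s t) as [Hst|Hts].
  - apply (locally_constant_segment P s t Hst); [|exact Ps].
    intros r Hr. exact (loc r (convex s t r Is It Hr)).
  - (* run the segment argument from t to s with the negated predicate *)
    apply NNPP; intro nPt.
    enough (~ P s) by contradiction.
    apply (locally_constant_segment (fun q => ~ P q) t s); [lra| |exact nPt].
    intros r Hr. destruct (loc r (convex t s r It Is Hr)) as [u [v [Hr' Huv]]].
    exists u, v; split; [exact Hr'|].
    intros q Hq. specialize (Huv q Hq). tauto.
Qed.

Lemma oint_convex (a : R) (b : option R) (r s q : R) :
  oint a b r -> oint a b s -> r <= q <= s -> oint a b q.
Proof.
  intros [Hr1 Hr2] [Hs1 Hs2] Hq. split; [lra|].
  destruct b as [b'|]; simpl in *; [lra|exact I].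
Qed.

Lemma oint_inhabited (a : R) (b : option R) : lt_ext a b -> exists t, oint a b t.
Proof.
  intros Hab. destruct b as [b'|]; simpl in Hab.
  - exists ((a + b') / 2). unfold oint; simpl; lra.
  - exists (a + 1). unfold oint; simpl; split; [lra|exact I].
Qed.

Lemma oint_bounded_nbhd (c : R) (d : option R) (t : R) :
  oint c d t -> exists v, t < v /\ forall s, c < s < v -> oint c d s.
Proof.
  intros [Hct Htd]. destruct d as [d'|]; simpl in Htd.
  - exists d'. split; [exact Htd|]. intros s Hs. unfold oint; simpl; lra.
  - exists (t + 1). split; [lra|]. intros s Hs. split; [lra|exact I].
Qed.

Section LocalToGlobal.

Variables (G : AbGroup) (phi : G -> R) (alpha : G) (a : R) (b : option R).
Hypothesis a_nonneg : 0 <= a.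

Hypothesis locally_uniform : forall t, oint a b t ->
  exists u v x, u < t < v /\
    forall s, u < s < v -> oint a b s /\ phi_t_eq G phi s alpha (tnorm x s).

Definition witnessed_near (x : list R) (r : R) : Prop :=
  exists u v, u < r < v /\ forall s, u < s < v -> phi_t_eq G phi s alpha (tnorm x s).

(* By rigidity, near t "x witnesses near r" just says ‖x‖ = ‖y‖ for the local
   witness y of t, which does not depend on r. *)
Lemma witnessed_near_locally_constant (x : list R) (t : R) :
  oint a b t ->
  exists u v, u < t < v /\ forall r, u < r < v -> (witnessed_near x r <-> witnessed_near x t).
Proof.
  intros Ht. destruct (locally_uniform t Ht) as [u [v [y [Htuv Hy]]]].
  assert (same_as_y : forall r, u < r < v ->
            (witnessed_near x r <-> forall s, tnorm x s = tnorm y s)).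
  { intros r Hr. split.
    - intros [p [q [Hpq Hx]]].
      destruct (Hy r Hr) as [[Har _] _].
      apply (phi_t_witness_rigid G phi alpha x y (Rmax (Rmax p u) a) (Rmin q v)).
      + split; [apply (Rle_trans _ a); [lra|apply Rmax_r]|].
        apply Rmax_lub_lt; [apply Rmax_lub_lt|]; apply Rmin_glb_lt; lra.
      + intros s Hs. apply Hx.
        pose proof (Rmax_l (Rmax p u) a). pose proof (Rmax_l p u).
        pose proof (Rmin_l q v). lra.
      + intros s Hs. apply Hy.
        pose proof (Rmax_l (Rmax p u) a). pose proof (Rmax_r p u).
        pose proof (Rmin_r q v). lra.
    - intros Heq. exists u, v. split; [exact Hr|].
      intros s Hs. rewrite Heq. exact (proj2 (Hy s Hs)). }
  exists u, v. split; [exact Htuv|].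
  intros r Hr. rewrite (same_as_y r Hr), (same_as_y t Htuv). reflexivity.
Qed.

Lemma uniform_of_locally_uniform : lt_ext a b -> uniform G phi alpha (oint a b).
Proof.
  intros Hab. destruct (oint_inhabited a b Hab) as [t0 Ht0].
  destruct (locally_uniform t0 Ht0) as [u [v [x0 [Ht0uv Hx0]]]].
  exists x0. intros t Ht.
  assert (near_t0 : witnessed_near x0 t0).
  { exists u, v. split; [exact Ht0uv|]. intros s Hs. exact (proj2 (Hx0 s Hs)). }
  destruct (locally_constant_interval (oint a b) (witnessed_near x0)
              (oint_convex a b) (witnessed_near_locally_constant x0) t0 t Ht0 Ht near_t0)
    as [p [q [Hpq Hx]]].
  exact (Hx t Hpq).
Qed.

End LocalToGlobal.

Theorem lemma3p3 (G : AbGroup) (phi : G -> R) (alpha : G) (a : R) (b : option R) :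
  is_height G phi -> 0 <= a -> lt_ext a b ->
  (uniform G phi alpha (oint a b) <->
   (forall t, oint a b t ->
      exists (c : R) (d : option R),
        oint c d t /\
        (forall s, oint c d s -> oint a b s) /\
        uniform G phi alpha (oint c d))).
Proof.
  intros _ Ha Hab. split.
  - intros Hu t Ht. exists a, b. split; [exact Ht|]. split; [auto|exact Hu].
  - intros Hloc. apply (uniform_of_locally_uniform G phi alpha a b Ha); [|exact Hab].
    intros t Ht.
    destruct (Hloc t Ht) as [c [d [Htcd [Hsub [x Hx]]]]].
    destruct (oint_bounded_nbhd c d t Htcd) as [v [Htv Hcv]].
    exists c, v, x. split; [split; [apply Htcd|exact Htv]|].
    intros s Hs. split; [apply Hsub|apply Hx]; exact (Hcv s Hs).
Qed.
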